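(* Assume: (A1) $f(x,y)$ and each component of $g(x,y)$ are convex in $y$ for each fixed $x$, and $f,g$ are twice continuously differentiable; (A2) $Y\subseteq\mathbb{R}^m$ is a compact convex set with $\{y:\exists x\in X \text{ such that } g(x,y)\le 0\}\subseteq\mathrm{int}(Y)$; (A3) $F$ and $G$ are twice continuously differentiable; (R1) for each $x\in X$ there exists $y$ with $g(x,y)<0$; (R2) $X$ is compact and nonempty, and the constraint set $\{x:G(x)\le0\}$ satisfies MFCQ at each $x\in X$. Let $\overline{\epsilon}\ge0$. Then, as $\epsilon\downarrow\overline{\epsilon}$, $\mu\downarrow0$ and $z\downarrow0$, $\limsup_{\epsilon\downarrow\overline{\epsilon},\mu\downarrow0,z\downarrow0}\big(z\text{-}\arg\min\mathsf{DBP}(\epsilon,\mu)\big)\subseteq\arg\min\mathsf{DBP}(\overline{\epsilon},0)$, and $z\text{-}\min\mathsf{DBP}(\epsilon,\mu)\to\min\mathsf{DBP}(\overline{\epsilon},0)$.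
   Context: Let $F:\mathbb{R}^n\times\mathbb{R}^m\to\mathbb{R}$, $f:\mathbb{R}^n\times\mathbb{R}^m\to\mathbb{R}$, $g:\mathbb{R}^n\times\mathbb{R}^m\to\mathbb{R}^p$, $G:\mathbb{R}^n\to\mathbb{R}^q$; vector inequalities componentwise; $X=\{x:G(x)\le0\}$; MFCQ for $\{x:G(x)\le0\}$ at $x$ means there is $d$ with $\nabla G_i(x)^{\mathsf T}d<0$ for all active indices $i$. For $\mu\ge0$, $h_\mu(\lambda,x)=\min_y\{\mu\|y\|^2+f(x,y)+\lambda^{\mathsf T}g(x,y):y\in Y\}$ with $Y$ from (A2); $\mathcal{C}(\epsilon,\mu)=\{(x,y,\lambda): G(x)\le0,\ g(x,y)\le\epsilon,\ \lambda\ge0,\ f(x,y)-h_\mu(\lambda,x)\le\epsilon\}$; $\mathsf{DBP}(\epsilon,\mu)$ is the problem of minimizing $F(x,y)$ over $(x,y,\lambda)\in\mathcal{C}(\epsilon,\mu)$. $z\text{-}\arg\min\mathsf{DBP}(\epsilon,\mu)$ is the set of feasible $(x,y,\lambda)$ with $F(x,y)\le\inf\mathsf{DBP}(\epsilon,\mu)+z$, and $z\text{-}\min\mathsf{DBP}(\epsilon,\mu)$ denotes the objective value at such points (any value in $[\inf, \inf+z]$ attained there). $\limsup$ of sets is the Painlevé–Kuratowski outer limit: the set of all cluster points of sequences of elements of the sets along the parameter sequence. *)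

From HB Require Import structures.
From mathcomp Require Import all_boot all_order all_algebra.
From mathcomp Require Import all_classical all_reals all_analysis.
Set Implicit Arguments. Unset Strict Implicit. Unset Printing Implicit Defensive.
Import Order.TTheory GRing.Theory Num.Theory.
Import numFieldNormedType.Exports.
Local Open Scope classical_set_scope.
Local Open Scope ring_scope.

Section Defs.
Variable R : realType.

Definition evec (N : nat) (i : 'I_N) : 'rV[R]_N := delta_mx 0 i.

Definition dotv (N : nat) (u v : 'rV[R]_N) : R := \sum_(j < N) u 0 j * v 0 j.
Definition sqnorm (N : nat) (u : 'rV[R]_N) : R := dotv u u.

Definition grad (N : nat) (h : 'rV[R]_N -> R) (x : 'rV[R]_N) : 'rV[R]_N :=
  \row_(j < N) 'D_(evec j) h x.

Definition C2 (N : nat) (h : 'rV[R]_N -> R) : Prop :=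
  continuous h /\
  forall i j : 'I_N,
    (forall x, derivable h x (evec i)) /\
    continuous (fun x => 'D_(evec i) h x) /\
    (forall x, derivable (fun y => 'D_(evec i) h y) x (evec j)) /\
    continuous (fun x => 'D_(evec j) (fun y => 'D_(evec i) h y) x).

Definition C2vec (N K : nat) (h : 'rV[R]_N -> 'rV[R]_K) : Prop :=
  forall k : 'I_K, C2 (fun x => h x 0 k).

Definition convex_fun (N : nat) (h : 'rV[R]_N -> R) : Prop :=
  forall (y1 y2 : 'rV[R]_N) (t : R), 0 <= t <= 1 ->
    h (t *: y1 + (1 - t) *: y2) <= t * h y1 + (1 - t) * h y2.

Definition Xset (n q : nat) (G : 'rV[R]_n -> 'rV[R]_q) : set 'rV[R]_n :=
  [set x | forall i : 'I_q, G x 0 i <= 0].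

Definition MFCQ (n q : nat) (G : 'rV[R]_n -> 'rV[R]_q) (x : 'rV[R]_n) : Prop :=
  exists d : 'rV[R]_n, forall i : 'I_q, G x 0 i = 0 ->
    dotv (grad (fun x' => G x' 0 i) x) d < 0.

Variables (n m p q : nat).
Variables (F f : 'rV[R]_(n + m) -> R) (g : 'rV[R]_(n + m) -> 'rV[R]_p)
          (G : 'rV[R]_n -> 'rV[R]_q) (Y : set 'rV[R]_m).

(* h_mu(lambda, x) = min_{y in Y} mu |y|^2 + f(x,y) + lambda^T g(x,y)
   (stated as an infimum in the extended reals) *)
Definition h_mu (mu : R) (lam : 'rV[R]_p) (x : 'rV[R]_n) : \bar R :=
  ereal_inf [set (mu * sqnorm y + f (row_mx x y) + dotv lam (g (row_mx x y)))%:E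
            | y in Y].

Definition dbpt := ('rV[R]_n * 'rV[R]_m * 'rV[R]_p)%type.

Definition Cset (eps mu : R) : set dbpt :=
  [set pt : dbpt | let: (x, y, lam) := pt in
     (forall i : 'I_q, G x 0 i <= 0) /\
     (forall i : 'I_p, g (row_mx x y) 0 i <= eps) /\
     (forall i : 'I_p, 0 <= lam 0 i) /\
     ((f (row_mx x y))%:E - h_mu mu lam x <= eps%:E)%E].

Definition Fval (pt : dbpt) : R := let: (x, y, _) := pt in F (row_mx x y).

Definition dbp_inf (eps mu : R) : \bar R := ereal_inf [set (Fval pt)%:E | pt in Cset eps mu].

Definition dbp_zargmin (eps mu z : R) : set dbpt :=
  [set pt | Cset eps mu pt /\ ((Fval pt)%:E <= dbp_inf eps mu + z%:E)%E].

Definition dbp_argmin (eps mu : R) : set dbpt :=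
  [set pt | Cset eps mu pt /\ (Fval pt)%:E = dbp_inf eps mu].

End Defs.

From HB Require Import structures.
From mathcomp Require Import all_boot all_order all_algebra.
From mathcomp Require Import all_classical all_reals all_analysis.
From mathcomp Require Import lra.
Import Order.TTheory GRing.Theory Num.Theory.
Import numFieldNormedType.Exports.
Local Open Scope classical_set_scope.
Local Open Scope ring_scope.
Set Implicit Arguments. Unset Strict Implicit. Unset Printing Implicit Defensive.

(* Feasibility is monotone in the parameters, so C(epsbar, 0) is contained in every
   C(eps, mu) and a z-minimizer of DBP(eps, mu) has value at most inf DBP(epsbar, 0) + z.
   Written as "f(x, y) - eps <= mu |y'|^2 + f(x, y') + lam . g(x, y') for all y' in Y",
   the value-function constraint shows that the graph of (eps, mu) |-> C(eps, mu) is
   closed; hence limits of z-minimizers are feasible, and optimal, for DBP(epsbar, 0).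
   For bounded parameters the sets C(eps, mu) all lie in one compact set: y is bounded
   because, g(x, .) being convex, the segment from a Slater point to a far away y crosses
   a shell around Y on which some constraint is violated by a uniform margin, and lam is
   bounded by testing the value-function constraint at a uniform Slater point.
   Consequently a closed set disjoint from C(epsbar, 0) is eventually avoided by points of
   C(eps_k, mu_k); applied to the whole space and to the sublevel sets of F, this gives
   that C(epsbar, 0) is nonempty and that the values of z-minimizers cannot stay below
   its infimum. *)

Lemma continuous_compose (T U V : topologicalType) (u : T -> U) (v : U -> V) :
  continuous u -> continuous v -> continuous (fun t => v (u t)).
Proof. by move=> cu cv t; apply: (@continuous_comp _ _ _ u v); [exact: cu | exact: cv]. Qed.

Lemma continuous_fst (T U V : topologicalType) (u : T -> U * V) :
  continuous u -> continuous (fun t => (u t).1).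
Proof. by move=> cu; apply: (continuous_compose (v := fst)) cu _ => w; exact: cvg_fst. Qed.

Lemma continuous_snd (T U V : topologicalType) (u : T -> U * V) :
  continuous u -> continuous (fun t => (u t).2).
Proof. by move=> cu; apply: (continuous_compose (v := snd)) cu _ => w; exact: cvg_snd. Qed.

Section continuity.
Variable R : realType.

Lemma continuous_mx (T : topologicalType) a b (h : T -> 'M[R]_(a, b)) :
  (forall i j, continuous (fun t => h t i j)) -> continuous h.
Proof.
move=> hc t; apply/cvg_mx_entourageP => A entA.
apply: filter_forall => i; apply: filter_forall => j.
have near_A : \forall s \near t, A (h t i j, h s i j).
  by have /cvg_entourageP := hc i j t; apply.
by apply: filterS near_A => s /= As; rewrite inE.
Qed.

Lemma continuous_coord (T : topologicalType) a b (u : T -> 'M[R]_(a, b)) i j :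
  continuous u -> continuous (fun t => u t i j).
Proof.
by move=> cu; exact: continuous_compose cu (@coord_continuous R a b i j).
Qed.

Lemma continuous_row_mx (T : topologicalType) a b
    (u : T -> 'rV[R]_a) (v : T -> 'rV[R]_b) :
  continuous u -> continuous v -> continuous (fun t => row_mx (u t) (v t)).
Proof.
move=> cu cv; apply: continuous_mx => i j; rewrite (ord1 i).
case: (split_ordP j) => k -> {j}.
- rewrite (_ : (fun s => _) = fun s => u s 0 k); last first.
    by apply/funext => s; rewrite row_mxEl.
  exact: continuous_coord.
- rewrite (_ : (fun s => _) = fun s => v s 0 k); last first.
    by apply/funext => s; rewrite row_mxEr.
  exact: continuous_coord.
Qed.

Lemma continuous_dotv (T : topologicalType) N (u v : T -> 'rV[R]_N) :
  continuous u -> continuous v -> continuous (fun t => dotv (u t) (v t)).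
Proof.
move=> cu cv; apply: continuous_big => [|j _ t]; first exact: add_continuous.
by apply: continuousM; exact: continuous_coord.
Qed.

Lemma closed_le_continuous (T : topologicalType) (u v : T -> R) :
  continuous u -> continuous v -> closed [set t | u t <= v t].
Proof.
move=> cu cv.
rewrite (_ : [set t | _] = (fun t => v t - u t) @^-1` [set x | 0 <= x]).
  apply: preimage_closed; last exact: closed_ge.
  by move=> t _; apply: continuousB; [exact: cv | exact: cu].
by apply/seteqP; split => t /=; rewrite subr_ge0.
Qed.

Lemma compact_continuous_ub (T : topologicalType) (A : set T) (u : T -> R) :
  compact A -> continuous u -> exists M, forall a, A a -> u a <= M.
Proof.
move=> cA cu.
have /compact_bounded [M [_ HM]] : compact (u @` A).
  by apply: continuous_compact => //; exact: continuous_subspaceT.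
exists (M + 1) => a Aa; apply: le_trans (ler_norm _) _.
by apply: (HM (M + 1)); [rewrite ltrDl | exists a].
Qed.

Lemma compact_norm_le N (r : R) : compact [set y : 'rV[R]_N | `|y| <= r].
Proof.
apply: bounded_closed_compact.
  by exists r; split => [|M rM y /= yr]; [exact: num_real | exact: le_trans yr (ltW rM)].
exact: closed_le_continuous (@norm_continuous _ _) (@cst_continuous _ _ _).
Qed.

Lemma segment_point_in_shell (V : normedModType R) (r : R) (y yh : V) :
  `|yh| <= r -> 4 * r < `|y - yh| ->
  let t := 3 * r / `|y - yh| in
  0 <= t <= 1 /\ 2 * r <= `|t *: y + (1 - t) *: yh| <= 4 * r.
Proof.
move=> yh_le D_gt t; set D := `|y - yh| in D_gt t *.
have r_ge0 : 0 <= r := le_trans (normr_ge0 _) yh_le.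
have D_gt0 : 0 < D by lra.
have t_ge0 : 0 <= t by rewrite divr_ge0 //; lra.
have t_le1 : t <= 1 by rewrite ler_pdivrMr //; lra.
set z := t *: y + (1 - t) *: yh.
have : `|z - yh| = 3 * r.
  rewrite /z scalerBl scale1r addrCA (addrC yh) addrK -scalerBr normrZ ger0_norm //.
  by rewrite /t divfK // gt_eqF.
have : `|z| <= `|z - yh| + `|yh| by rewrite -{1}(subrK yh z) ler_normD.
have := ler_normB z yh.
rewrite t_ge0 t_le1; lra.
Qed.

Lemma compact_uniform_margin (T : topologicalType) (J : Type) (I : finType)
    (K : set T) (phi : J -> I -> T -> R) :
  compact K -> (forall j i, continuous (phi j i)) ->
  (forall w, K w -> exists j, forall i, 0 < phi j i w) ->
  exists2 d, 0 < d & forall w, K w -> exists j, forall i, d <= phi j i w.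
Proof.
move=> cK cphi phi_gt0.
have : \forall d \near 0^'+, K `<=` (fun w => exists j, forall i, d <= phi j i w).
  apply: (compact_near_coveringP K).1 => // w /phi_gt0 [j phij].
  have near_phi i : \forall w' \near w & d \near 0^'+, d <= phi j i w'.
    have a_gt0 := phij i; set a := phi j i w in a_gt0.
    exists ([set w' | a / 2 < phi j i w'], [set d : R | d < a / 2]).
      split; last by apply: nbhs_right_lt; lra.
      by apply: (cvgr_gt a (cphi j i w)); lra.
    by move=> [w' d] [/= ? ?]; lra.
  have prod_filter : Filter (filter_prod (nbhs w) (0 : R)^'+).
    exact: filter_prod_filter.
  by apply: filterS (filter_forall prod_filter near_phi) => -[w' d] /= ?; exists j.
move=> near_margin.
by have [d [/= d_gt0 margin]] := filter_ex (filterI (nbhs_right_gt 0) near_margin); exists d.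
Qed.

End continuity.

Section bilevel.
Variables (R : realType) (n m p q : nat).
Variables (F f : 'rV[R]_(n + m) -> R) (g : 'rV[R]_(n + m) -> 'rV[R]_p)
  (G : 'rV[R]_n -> 'rV[R]_q) (Y : set 'rV[R]_m).

Local Notation C := (Cset f g G Y).
Local Notation dbp_inf := (dbp_inf F f g G Y).
Local Notation X := (Xset G).

Definition lagrangian (mu : R) (lam : 'rV[R]_p) (x : 'rV[R]_n) (y : 'rV[R]_m) : R :=
  mu * sqnorm y + f (row_mx x y) + dotv lam (g (row_mx x y)).

Lemma value_gap_leP mu lam x y e :
  ((f (row_mx x y))%:E - h_mu f g Y mu lam x <= e%:E)%E <->
  (forall y', Y y' -> f (row_mx x y) - e <= lagrangian mu lam x y').
Proof.
rewrite lee_subel_addr // -leeBlDl // -EFinB; split.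
- by move=> /ereal_infP inf_ge y' Yy'; rewrite -lee_fin; apply: inf_ge; exists y'.
- by move=> lag_ge; apply/ereal_infP => _ [y' Yy' <-]; rewrite lee_fin; exact: lag_ge.
Qed.

Lemma sqnorm_ge0 N (u : 'rV[R]_N) : 0 <= sqnorm u.
Proof. by apply: sumr_ge0 => j _; rewrite -expr2 sqr_ge0. Qed.

Lemma Cset_mono eps mu eps' mu' : eps <= eps' -> mu <= mu' -> C eps mu `<=` C eps' mu'.
Proof.
move=> le_eps le_mu [[x y] lam] [Xx [gy [lam_ge0 gap]]].
split=> //; split=> [i|]; first exact: le_trans (gy i) le_eps.
split=> //; apply/value_gap_leP => y' Yy'.
have := (value_gap_leP _ _ _ _ _).1 gap y' Yy'; rewrite /lagrangian.
have : mu * sqnorm y' <= mu' * sqnorm y' by apply: ler_wpM2r => //; exact: sqnorm_ge0.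
lra.
Qed.

Lemma dbp_inf_mono eps mu eps' mu' : eps <= eps' -> mu <= mu' ->
  (dbp_inf eps' mu' <= dbp_inf eps mu)%E.
Proof.
move=> le_eps le_mu; apply/ereal_infP => _ [P CP <-].
by apply: ereal_inf_lbound; exists P => //; exact: Cset_mono CP.
Qed.

Hypothesis cF : continuous F.
Hypothesis cf : continuous f.
Hypothesis cg : continuous g.
Hypothesis cG : continuous G.

Lemma continuous_Fval : continuous (Fval F : dbpt R n m p -> R).
Proof.
rewrite (_ : Fval F = fun P => F (row_mx P.1.1 P.1.2)); last by apply/funext => -[[]].
have c_pt : continuous (fun P : dbpt R n m p => P) by move=> P; exact: cvg_id.
apply: continuous_compose cF.
exact: continuous_row_mx (continuous_fst (continuous_fst c_pt))
  (continuous_snd (continuous_fst c_pt)).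
Qed.

Lemma continuous_lagrangian (T : topologicalType) (mu : T -> R) (lam : T -> 'rV[R]_p)
    (x : T -> 'rV[R]_n) y :
  continuous mu -> continuous lam -> continuous x ->
  continuous (fun t => lagrangian (mu t) (lam t) (x t) y).
Proof.
move=> cmu clam cx.
have cxy : continuous (fun t => row_mx (x t) y).
  exact: continuous_row_mx cx (@cst_continuous _ _ y).
rewrite /lagrangian => t; apply: cvgD; first apply: cvgD.
- by apply: cvgM; [exact: cmu | exact: cvg_cst].
- exact: continuous_compose cxy cf t.
- exact: continuous_dotv clam (continuous_compose cxy cg) t.
Qed.

Definition Cgraph : set ((R * R) * dbpt R n m p) := [set w | C w.1.1 w.1.2 w.2].

Lemma closed_Cgraph : closed Cgraph.
Proof.
have closure_sub S : closed S -> Cgraph `<=` S -> closure Cgraph `<=` S.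
  by move=> cS sub w /(closureS sub)/cS.
have c_w : continuous (fun w : (R * R) * dbpt R n m p => w) by move=> w; exact: cvg_id.
have c_eps := continuous_fst (continuous_fst c_w).
have c_mu := continuous_snd (continuous_fst c_w).
have c_x := continuous_fst (continuous_fst (continuous_snd c_w)).
have c_y := continuous_snd (continuous_fst (continuous_snd c_w)).
have c_lam := continuous_snd (continuous_snd c_w).
have c_xy := continuous_row_mx c_x c_y.
move=> [[e mu] [[x y] lam]] cl; split; [|split; [|split]].
- move=> i; apply: (closure_sub [set w | G w.2.1.1 0 i <= 0]) cl.
    exact: closed_le_continuous (continuous_coord (continuous_compose c_x cG))
      (@cst_continuous _ _ 0).
  by move=> [? [[? ?] ?]] [+ _]; apply.
- move=> i; apply: (closure_sub [set w | g (row_mx w.2.1.1 w.2.1.2) 0 i <= w.1.1]) cl.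
    exact: closed_le_continuous (continuous_coord (continuous_compose c_xy cg)) c_eps.
  by move=> [? [[? ?] ?]] [_ [+ _]]; apply.
- move=> i; apply: (closure_sub [set w : (R * R) * dbpt R n m p | 0 <= w.2.2 0 i]) cl.
    exact: closed_le_continuous (@cst_continuous _ _ 0) (continuous_coord c_lam).
  by move=> [? [[? ?] ?]] [_ [_ [+ _]]]; apply.
- apply/value_gap_leP => y' Yy'.
  apply: (closure_sub [set w | f (row_mx w.2.1.1 w.2.1.2) - w.1.1
                                <= lagrangian w.1.2 w.2.2 w.2.1.1 y']) cl.
    apply: closed_le_continuous (continuous_lagrangian c_mu c_lam c_x).
    by move=> w; apply: cvgB; [exact: continuous_compose c_xy cf w | exact: c_eps].
  by move=> [? [[? ?] ?]] [_ [_ [_ /value_gap_leP]]]; apply.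
Qed.

Hypothesis g_convex : forall x i, convex_fun (fun y : 'rV[R]_m => g (row_mx x y) 0 i).
Hypothesis cY : compact Y.
Hypothesis lower_feasible_interior :
  [set y | exists2 x, X x & forall i, g (row_mx x y) 0 i <= 0] `<=` interior Y.
Hypothesis slater : forall x, X x -> exists y, forall i, g (row_mx x y) 0 i < 0.
Hypothesis cX : compact X.

Lemma lower_feasible_in_Y x y : X x -> (forall i, g (row_mx x y) 0 i <= 0) -> Y y.
Proof. by move=> Xx gy; apply: interior_subset; apply: lower_feasible_interior; exists x. Qed.

Lemma Y_norm_bound : exists2 r, 0 < r & forall y, Y y -> `|y| <= r.
Proof.
have [M [_ YM]] := compact_bounded cY.
exists (Num.max (M + 1) 1); first by rewrite lt_max ltr01 orbT.
by move=> y Yy; apply: (YM (Num.max (M + 1) 1)) => //; rewrite lt_max ltrDl ltr01.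
Qed.

Lemma uniform_slater : exists2 d, 0 < d &
  forall x, X x -> exists yh, forall i, g (row_mx x yh) 0 i <= - d.
Proof.
have c_gy y : continuous (fun x => g (row_mx x y)).
  exact: continuous_compose (continuous_row_mx (fun x => cvg_id) (@cst_continuous _ _ y)) cg.
have c_margin y i : continuous (fun x => - g (row_mx x y) 0 i).
  exact: continuous_compose (continuous_coord (c_gy y)) (@oppr_continuous _ R).
have pos_margin x : X x -> exists y, forall i, 0 < - g (row_mx x y) 0 i.
  by move=> /slater [y gy]; exists y => i; rewrite oppr_gt0.
have [d d_gt0 margin] := compact_uniform_margin cX c_margin pos_margin.
by exists d => // x /margin [y gy]; exists y => i; rewrite lerNr.
Qed.

Lemma constraint_margin_on_shell r : 0 < r -> (forall y, Y y -> `|y| <= r) ->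
  exists2 d, 0 < d & forall x z, X x -> 2 * r <= `|z| <= 4 * r ->
    exists i, d <= g (row_mx x z) 0 i.
Proof.
move=> r_gt0 Y_le.
set shell := [set z : 'rV[R]_m | `|z| <= 4 * r] `&` [set z | 2 * r <= `|z|].
have c_shell : compact shell.
  apply: compact_closedI; first exact: compact_norm_le.
  exact: closed_le_continuous (@cst_continuous _ _ _) (@norm_continuous _ _).
(* A single violated constraint suffices, so the inner index set is [unit]. *)
have c_g i (_ : unit) : continuous (fun w : 'rV[R]_n * 'rV[R]_m => g (row_mx w.1 w.2) 0 i).
  apply: continuous_coord; apply: continuous_compose cg.
  have c_w : continuous (fun w : 'rV[R]_n * 'rV[R]_m => w) by move=> w; exact: cvg_id.
  exact: continuous_row_mx (continuous_fst c_w) (continuous_snd c_w).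
have pos_g w : (X `*` shell) w -> exists i, forall _ : unit, 0 < g (row_mx w.1 w.2) 0 i.
  move: w => [x z] [Xx [/= z_le z_ge]]; apply: contrapT => /forallNP g_le.
  have /Y_le : Y z.
    apply: (lower_feasible_in_Y Xx) => i.
    by have /existsNP [[] /negP] := g_le i; rewrite -leNgt.
  lra.
have [d d_gt0 margin] := compact_uniform_margin (compact_setX cX c_shell) c_g pos_g.
exists d => // x z Xx /andP [z_ge z_le].
by have [i /(_ tt)] := margin (x, z) (conj Xx (conj z_le z_ge)); exists i.
Qed.

Lemma feasible_lower_bounded E : exists Ry, forall x y e, X x -> e <= E ->
  (forall i, g (row_mx x y) 0 i <= e) -> `|y| <= Ry.
Proof.
have [r r_gt0 Y_le] := Y_norm_bound.
have [d d_gt0 margin] := constraint_margin_on_shell r_gt0 Y_le.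
exists (Num.max (5 * r) (r + 3 * r * E / d)) => x y e Xx e_le gy.
rewrite le_max; have [//|y_gt /=] := leP `|y| (5 * r).
have [yh gyh] := slater Xx.
have yh_le := Y_le _ (lower_feasible_in_Y Xx (fun i => ltW (gyh i))).
set D := `|y - yh|.
have y_le : `|y| <= D + `|yh| by rewrite -{1}(subrK yh y) ler_normD.
have D_gt : 4 * r < D by lra.
have [t01 z_shell] := segment_point_in_shell yh_le D_gt.
set t := 3 * r / D in t01 z_shell.
have [i d_le] := margin x _ Xx z_shell.
have d_le_tE : d <= t * E.
  have := g_convex x i y yh t01; move: t01 => /andP [t_ge0 t_le1].
  have : (1 - t) * g (row_mx x yh) 0 i <= 0 by rewrite mulr_ge0_le0 ?subr_ge0 // ltW.
  have : t * g (row_mx x y) 0 i <= t * E by rewrite ler_wpM2l // (le_trans (gy i)).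
  lra.
have tD : t * D = 3 * r by rewrite /t divfK // gt_eqF //; lra.
have : D <= 3 * r * E / d by rewrite ler_pdivlMr // -tD; nra.
lra.
Qed.

Lemma feasible_multiplier_bounded E Ry : exists Rl, forall e mu x y lam,
  e <= E -> mu <= 1 -> `|y| <= Ry -> C e mu ((x, y), lam) -> forall i, lam 0 i <= Rl.
Proof.
have [d d_gt0 uslater] := uniform_slater.
have c_w : continuous (fun w : 'rV[R]_n * 'rV[R]_m => w) by move=> w; exact: cvg_id.
have c_f : continuous (fun w : 'rV[R]_n * 'rV[R]_m => f (row_mx w.1 w.2)).
  exact: continuous_compose (continuous_row_mx (continuous_fst c_w) (continuous_snd c_w)) cf.
have c_sq : continuous (fun w : 'rV[R]_n * 'rV[R]_m => sqnorm w.2).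
  exact: continuous_dotv (continuous_snd c_w) (continuous_snd c_w).
have [B1 B1_ge] := compact_continuous_ub (compact_setX cX cY)
  (fun w => cvgD (c_sq w) (c_f w)).
have [B2 B2_ge] := compact_continuous_ub (compact_setX cX (compact_norm_le (r := Ry)))
  (continuous_compose c_f (@oppr_continuous _ R)).
exists ((B1 + B2 + E) / d) => e mu x y lam e_le mu_le y_le [Xx [_ [lam_ge0 gap]]] i.
have [yh gyh] := uslater x Xx.
have Y_yh : Y yh.
  by apply: (lower_feasible_in_Y Xx) => j; apply: le_trans (gyh j) _; rewrite oppr_le0 ltW.
have := (value_gap_leP _ _ _ _ _).1 gap yh Y_yh; rewrite /lagrangian.
have : mu * sqnorm yh <= sqnorm yh by have := sqnorm_ge0 yh; nra.
have : dotv lam (g (row_mx x yh)) <= - d * \sum_j lam 0 j.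
  rewrite /dotv mulr_sumr; apply: ler_sum => j _.
  by rewrite [leRHS]mulrC ler_wpM2l ?lam_ge0 ?gyh.
have : d * lam 0 i <= d * \sum_j lam 0 j.
  by apply: ler_wpM2l; [exact: ltW | rewrite (bigD1 i) //= lerDl sumr_ge0].
have : sqnorm yh + f (row_mx x yh) <= B1 := B1_ge (x, yh) (conj Xx Y_yh).
have : - f (row_mx x y) <= B2 := B2_ge (x, y) (conj Xx y_le).
rewrite ler_pdivlMr // mulrC; lra.
Qed.

Lemma Cset_bounded E : exists2 K, compact K &
  forall e mu P, e <= E -> mu <= 1 -> C e mu P -> K P.
Proof.
have [Ry y_le] := feasible_lower_bounded E.
have [Rl lam_le] := feasible_multiplier_bounded E Ry.
exists ((X `*` [set y | `|y| <= Ry]) `*`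
        [set lam : 'rV[R]_p | forall i, `[0, Rl]%classic (lam 0 i)]).
  apply: compact_setX; first exact: compact_setX cX (compact_norm_le (r := Ry)).
  by apply: (@rV_compact _ _ (fun _ => `[0, Rl]%classic)) => i; exact: segment_compact.
move=> e mu [[x y] lam] e_le mu_le CP; have [Xx [gy [lam_ge0 _]]] := CP.
have y_bd := y_le x y e Xx e_le gy.
split=> //= i; rewrite in_itv /= lam_ge0.
exact: lam_le CP i.
Qed.

Lemma Cset_eventually_outside (epsbar : R) (eps mu : nat -> R)
    (pt : nat -> dbpt R n m p) (S : set (dbpt R n m p)) :
  eps k @[k --> \oo] --> epsbar -> mu k @[k --> \oo] --> 0 ->
  (forall k, C (eps k) (mu k) (pt k)) ->
  closed S -> S `&` C epsbar 0 = set0 ->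
  \forall k \near \oo, ~ S (pt k).
Proof.
move=> eps_cvg mu_cvg C_pt cS S_C0.
have [K cK C_K] := Cset_bounded (epsbar + 1).
pose box : set (R * R) := `[epsbar - 1, epsbar + 1]%classic `*` `[-1, 1]%classic.
pose A := ((box `*` K) `&` Cgraph) `&` (snd @^-1` S).
(* [fst @` A] is the compact set of parameters in [box] whose feasible set meets [S]. *)
have cA : compact A.
  apply: compact_closedI; first apply: compact_closedI.
  - by apply: compact_setX => //; apply: compact_setX; exact: segment_compact.
  - exact: closed_Cgraph.
  - by apply: preimage_closed => // w _; exact: cvg_snd.
have c_params : closed (fst @` A).
  apply: compact_closed; first exact: norm_hausdorff.
  apply: continuous_compact => //.
  by apply: continuous_subspaceT => w; exact: cvg_fst.
have nbhs_out : nbhs (epsbar, 0) (~` (fst @` A)).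
  apply: open_nbhs_nbhs; split; first exact: closed_openC.
  move=> [[[e mu0] P] [[_ CP] SP] /= [e_eq mu0_eq]]; rewrite e_eq mu0_eq in CP.
  by have : (S `&` C epsbar 0) P by []; rewrite S_C0.
have near_out : \forall k \near \oo, (~` (fst @` A)) (eps k, mu k).
  exact: (cvg_pair eps_cvg mu_cvg) nbhs_out.
near=> k => S_pt; apply: (near near_out k) => //.
have eps_near : `|epsbar - eps k| <= 1.
  by near: k; apply: cvgr_dist_le; [exact: eps_cvg | exact: ltr01].
have mu_near : `|0 - mu k| <= 1.
  by near: k; apply: cvgr_dist_le; [exact: mu_cvg | exact: ltr01].
have box_k : box (eps k, mu k).
  split; rewrite /= in_itv /=.
  - by rewrite -ler_distl distrC.
  - by rewrite -ler_norml -normrN -sub0r.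
exists ((eps k, mu k), pt k) => //; split => //; split; last exact: C_pt k.
split => //; apply: C_K (C_pt k).
- by move: box_k => [/= + _]; rewrite in_itv /= => /andP[].
- by move: box_k => [_ /=]; rewrite in_itv /= => /andP[].
Unshelve. all: end_near.
Qed.

Lemma zargmin_le_dbp_inf epsbar eps mu z Q : epsbar <= eps -> 0 <= mu ->
  dbp_zargmin F f g G Y eps mu z Q ->
  ((Fval F Q)%:E <= dbp_inf epsbar 0 + z%:E)%E.
Proof.
move=> le_eps mu_ge0 [_ FQ]; apply: le_trans FQ _.
by apply: leeD2r; exact: dbp_inf_mono.
Qed.

Lemma dbp_inf_fin_num epsbar z (P Q : dbpt R n m p) : C epsbar 0 P ->
  ((Fval F Q)%:E <= dbp_inf epsbar 0 + z%:E)%E -> dbp_inf epsbar 0 \is a fin_num.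
Proof.
move=> CP FQ; have inf_le : (dbp_inf epsbar 0 <= (Fval F P)%:E)%E.
  by apply: ereal_inf_lbound; exists P.
apply/fin_numP; split.
- by apply: contraTneq FQ => ->; rewrite addNye leeNy_eq.
- by apply: contraTneq inf_le => ->; rewrite leye_eq.
Qed.

Lemma zargmin_limit_in_argmin epsbar (eps mu z : nat -> R)
    (pt : nat -> dbpt R n m p) (P : dbpt R n m p) :
  (forall k, epsbar < eps k) -> eps k @[k --> \oo] --> epsbar ->
  (forall k, 0 < mu k) -> mu k @[k --> \oo] --> 0 -> z k @[k --> \oo] --> 0 ->
  (forall k, dbp_zargmin F f g G Y (eps k) (mu k) (z k) (pt k)) ->
  pt k @[k --> \oo] --> P ->
  dbp_argmin F f g G Y epsbar 0 P.
Proof.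
move=> eps_gt eps_cvg mu_gt0 mu_cvg z_cvg zopt pt_cvg.
have C_P : Cgraph ((epsbar, 0), P).
  apply: (@closed_cvg _ _ \oo _ (fun k => ((eps k, mu k), pt k)) _ closed_Cgraph).
    by apply: nearW => k; exact: (zopt k).1.
  exact: cvg_pair (cvg_pair eps_cvg mu_cvg) pt_cvg.
have Fpt_le k := zargmin_le_dbp_inf (ltW (eps_gt k)) (ltW (mu_gt0 k)) (zopt k).
have /fineK inf_fin := dbp_inf_fin_num C_P (Fpt_le 0%N).
split=> //; apply/eqP; rewrite eq_le ereal_inf_lbound ?andbT; last by exists P.
rewrite -inf_fin lee_fin.
have Fpt_cvg : Fval F (pt k) - z k @[k --> \oo] --> Fval F P.
  rewrite -[Fval F P]subr0; apply: cvgB z_cvg.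
  exact: cvg_comp pt_cvg (@continuous_Fval P).
apply: (@closed_cvg _ _ \oo _ (fun k => Fval F (pt k) - z k) _ (@closed_le _ _) _ _ Fpt_cvg).
by apply: nearW => k /=; rewrite lerBlDr -lee_fin EFinD inf_fin; exact: Fpt_le.
Qed.

Lemma zmin_cvg_dbp_inf epsbar (eps mu z : nat -> R) (pt : nat -> dbpt R n m p) :
  (forall k, epsbar < eps k) -> eps k @[k --> \oo] --> epsbar ->
  (forall k, 0 < mu k) -> mu k @[k --> \oo] --> 0 -> z k @[k --> \oo] --> 0 ->
  (forall k, dbp_zargmin F f g G Y (eps k) (mu k) (z k) (pt k)) ->
  (Fval F (pt k))%:E @[k --> \oo] --> dbp_inf epsbar 0.
Proof.
move=> eps_gt eps_cvg mu_gt0 mu_cvg z_cvg zopt.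
have C_pt k : C (eps k) (mu k) (pt k) := (zopt k).1.
have [P C_P] : C epsbar 0 !=set0.
  apply: contrapT => /nonemptyPn C0.
  have T_C0 : setT `&` C epsbar 0 = set0 by rewrite setTI.
  by have /filter_ex [k /(_ I)] := Cset_eventually_outside eps_cvg mu_cvg C_pt closedT T_C0.
have Fpt_le k := zargmin_le_dbp_inf (ltW (eps_gt k)) (ltW (mu_gt0 k)) (zopt k).
have /fineK inf_fin := dbp_inf_fin_num C_P (Fpt_le 0%N).
set r := fine (dbp_inf epsbar 0) in inf_fin *; rewrite -inf_fin.
apply/fine_cvgP; split; first exact: nearW.
apply/cvgrPdist_lt => e e_gt0.
have S_C0 : [set Q | Fval F Q <= r - e / 2] `&` C epsbar 0 = set0.
  apply/seteqP; split => // Q [/= FQ CQ].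
  have : (dbp_inf epsbar 0 <= (Fval F Q)%:E)%E by apply: ereal_inf_lbound; exists Q.
  by rewrite -inf_fin lee_fin; lra.
have near_lb := Cset_eventually_outside eps_cvg mu_cvg C_pt
  (closed_le_continuous continuous_Fval (@cst_continuous _ _ (r - e / 2))) S_C0.
have near_z : \forall k \near \oo, z k < e / 2 by apply: (cvgr_lt 0 z_cvg); lra.
apply: filterS2 near_lb near_z => k /negP; rewrite -ltNge /= => Fk_gt zk_lt.
move: (Fpt_le k); rewrite -inf_fin -EFinD lee_fin => Fk_le.
by rewrite ltr_norml; apply/andP; split; lra.
Qed.

End bilevel.

Unset Implicit Arguments.

Theorem corollary4 (R : realType) (n m p q : nat)
  (F f : 'rV[R]_(n + m) -> R) (g : 'rV[R]_(n + m) -> 'rV[R]_p)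
  (G : 'rV[R]_n -> 'rV[R]_q) (Y : set 'rV[R]_m) (epsbar : R) :
  (* (A1) *)
  (forall x : 'rV[R]_n, convex_fun (fun y : 'rV[R]_m => f (row_mx x y))) ->
  (forall (x : 'rV[R]_n) (i : 'I_p), convex_fun (fun y : 'rV[R]_m => g (row_mx x y) 0 i)) ->
  C2 f -> C2vec g ->
  (* (A2) *)
  compact Y -> convex_set Y ->
  [set y | exists2 x, Xset G x & forall i : 'I_p, g (row_mx x y) 0 i <= 0] `<=` interior Y ->
  (* (A3) *)
  C2 F -> C2vec G ->
  (* (R1) *)
  (forall x, Xset G x -> exists y : 'rV[R]_m, forall i : 'I_p, g (row_mx x y) 0 i < 0) ->
  (* (R2) *)
  compact (Xset G) -> Xset G !=set0 -> (forall x, Xset G x -> MFCQ G x) ->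
  0 <= epsbar ->
  (* limsup of z-argmin DBP(eps,mu) is contained in argmin DBP(epsbar,0) *)
  (forall (eps mu z : nat -> R) (pt : nat -> dbpt R n m p) (P : dbpt R n m p),
     (forall k, epsbar < eps k) -> eps k @[k --> \oo] --> epsbar ->
     (forall k, 0 < mu k) -> mu k @[k --> \oo] --> 0 ->
     (forall k, 0 < z k) -> z k @[k --> \oo] --> 0 ->
     (forall k, dbp_zargmin F f g G Y (eps k) (mu k) (z k) (pt k)) ->
     pt k @[k --> \oo] --> P ->
     dbp_argmin F f g G Y epsbar 0 P)
  /\
  (* z-min DBP(eps,mu) converges to min DBP(epsbar,0) *)
  (forall (eps mu z : nat -> R) (pt : nat -> dbpt R n m p),
     (forall k, epsbar < eps k) -> eps k @[k --> \oo] --> epsbar ->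
     (forall k, 0 < mu k) -> mu k @[k --> \oo] --> 0 ->
     (forall k, 0 < z k) -> z k @[k --> \oo] --> 0 ->
     (forall k, dbp_zargmin F f g G Y (eps k) (mu k) (z k) (pt k)) ->
     (Fval F (pt k))%:E @[k --> \oo] --> dbp_inf F f g G Y epsbar 0).
Proof.
move=> _ g_convex Cf Cg cY _ Y_int CF CG slater cX _ _ _.
have cg : continuous g.
  by apply: continuous_mx => i j; rewrite (ord1 i); exact: (Cg j).1.
have cG : continuous G.
  by apply: continuous_mx => i j; rewrite (ord1 i); exact: (CG j).1.
split=> [eps mu z pt P | eps mu z pt] eps_gt eps_cvg mu_gt0 mu_cvg _ z_cvg zopt.
- exact (zargmin_limit_in_argmin CF.1 Cf.1 cg cG eps_gt eps_cvg mu_gt0 mu_cvg z_cvg zopt).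
- exact (zmin_cvg_dbp_inf CF.1 Cf.1 cg cG g_convex cY Y_int slater cX
    eps_gt eps_cvg mu_gt0 mu_cvg z_cvg zopt).
Qed.
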